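(* Let $A,B$ be constant complex $(2\times2)$ matrices with $\operatorname{tr}A=0$ and $\det A\ge-\frac14$ (in particular $\det A$ is real). Let $y:(0,1]\to\mathbb{C}^2$ be a solution of $x\,y'(x)=(A+xB)y(x)$, $x\in(0,1]$. If $y\not\equiv0$, then there exists a constant $\varepsilon>0$ such that $|y(x)|\ge\varepsilon\sqrt{x}$ for all $x\in(0,1]$. *)

From Stdlib Require Import Reals.
From Coquelicot Require Import Coquelicot.
Open Scope R_scope.

Record mat2 := Mat2 { m11 : C; m12 : C; m21 : C; m22 : C }.

Definition vec2 := (C * C)%type.

Definition tr2 (M : mat2) : C := Cplus (m11 M) (m22 M).
Definition det2 (M : mat2) : C :=
  Cminus (Cmult (m11 M) (m22 M)) (Cmult (m12 M) (m21 M)).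

Definition mat2_add_scal (A : mat2) (t : R) (B : mat2) : mat2 :=
  Mat2 (Cplus (m11 A) (Cmult (RtoC t) (m11 B)))
       (Cplus (m12 A) (Cmult (RtoC t) (m12 B)))
       (Cplus (m21 A) (Cmult (RtoC t) (m21 B)))
       (Cplus (m22 A) (Cmult (RtoC t) (m22 B))).

Definition mulmv2 (M : mat2) (v : vec2) : vec2 :=
  (Cplus (Cmult (m11 M) (fst v)) (Cmult (m12 M) (snd v)),
   Cplus (Cmult (m21 M) (fst v)) (Cmult (m22 M) (snd v))).

Definition scalv2 (t : R) (v : vec2) : vec2 :=
  (Cmult (RtoC t) (fst v), Cmult (RtoC t) (snd v)).

Definition vnorm2 (v : vec2) : R :=
  sqrt (Cmod (fst v) ^ 2 + Cmod (snd v) ^ 2).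

Definition in01 (x : R) : Prop := 0 < x <= 1.

(* f : R -> C has derivative f' at every point of (0,1], the derivative
   being taken within the domain (0,1] (one-sided at x = 1). *)
Definition C_deriv_on01 (f f' : R -> C) : Prop :=
  forall x, in01 x ->
  forall eps, 0 < eps -> exists delta, 0 < delta /\
    forall h, h <> 0 -> in01 (x + h) -> Rabs h < delta ->
      Cmod (Cminus (Cdiv (Cminus (f (x + h)) (f x)) (RtoC h)) (f' x)) < eps.

Definition deriv_on01 (y y' : R -> vec2) : Prop :=
  C_deriv_on01 (fun x => fst (y x)) (fun x => fst (y' x)) /\
  C_deriv_on01 (fun x => snd (y x)) (fun x => snd (y' x)).

(* Set c = (1 + sqrt (1 + 4 det A)) / 2, a positive root of c^2 - c - det A = 0, and
   consider the energy Q(x) = |A y(x)|^2 + c^2 |y(x)|^2.  Since tr A = 0, A^2 = - det A,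
   so the equation x y' = (A + x B) y gives
     x Q' = 2 (c^2 - det A) Re <y, A y> + O(x) Q = 2 c Re <y, A y> + O(x) Q,
   and |2 c Re <y, A y>| <= Q.  Hence |x Q'| <= (1 + K x) Q, and integrating this
   differential inequality from a point x0 where y(x0) <> 0 gives Q(x) >= kappa x on (0,1].
   Finally Q <= (|A|^2 + c^2) |y|^2. *)

From Stdlib Require Import Reals Lra.
From Coquelicot Require Import Coquelicot.
Open Scope R_scope.

Definition Cdot (a b : C) : R := Re a * Re b + Im a * Im b.

Definition vdot (u v : vec2) : R := Cdot (fst u) (fst v) + Cdot (snd u) (snd v).

Definition vnormsq (v : vec2) : R := vdot v v.

Definition mat2_fnormsq (M : mat2) : R :=
  vnormsq (m11 M, m12 M) + vnormsq (m21 M, m22 M).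

Ltac coords :=
  repeat match goal with
  | M : mat2 |- _ => destruct M
  | v : vec2 |- _ => destruct v
  | z : C |- _ => destruct z
  | p : (_ * _)%type |- _ => destruct p
  end;
  unfold mat2_fnormsq, vnormsq, vdot, Cdot, mulmv2, scalv2, mat2_add_scal,
    Re, Im, Cplus, Cmult, RtoC in *; simpl in *.

Lemma vnorm2_sqrt (v : vec2) : vnorm2 v = sqrt (vnormsq v).
Proof.
  unfold vnorm2; rewrite !Cmod2_alt; f_equal; coords; ring.
Qed.

Lemma vnormsq_ge0 (v : vec2) : 0 <= vnormsq v.
Proof. coords; nra. Qed.

Lemma vnormsq_gt0 (v : vec2) : v <> (RtoC 0, RtoC 0) -> 0 < vnormsq v.
Proof.
  destruct v as [[a1 a2] [b1 b2]].
  intros Hv; apply Rnot_le_lt; intros Hle; apply Hv; coords.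
  assert (a1 = 0) by nra; assert (a2 = 0) by nra;
  assert (b1 = 0) by nra; assert (b2 = 0) by nra; subst; reflexivity.
Qed.

Lemma mat2_fnormsq_ge0 (M : mat2) : 0 <= mat2_fnormsq M.
Proof.
  unfold mat2_fnormsq.
  pose proof (vnormsq_ge0 (m11 M, m12 M)); pose proof (vnormsq_ge0 (m21 M, m22 M)); lra.
Qed.

Lemma Rabs_2vdot_le (u v : vec2) : Rabs (2 * vdot u v) <= vnormsq u + vnormsq v.
Proof.
  destruct u as [[a1 a2] [a3 a4]], v as [[b1 b2] [b3 b4]].
  apply Rabs_le; coords.
  pose proof (Rle_0_sqr (a1 - b1)); pose proof (Rle_0_sqr (a2 - b2));
  pose proof (Rle_0_sqr (a3 - b3)); pose proof (Rle_0_sqr (a4 - b4));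
  pose proof (Rle_0_sqr (a1 + b1)); pose proof (Rle_0_sqr (a2 + b2));
  pose proof (Rle_0_sqr (a3 + b3)); pose proof (Rle_0_sqr (a4 + b4)).
  unfold Rsqr in *; split; nra.
Qed.

Lemma vdot_scalv2_r (t : R) (u v : vec2) : vdot u (scalv2 t v) = t * vdot u v.
Proof. coords; ring. Qed.

Lemma vnormsq_scalv2 (t : R) (v : vec2) : vnormsq (scalv2 t v) = t * t * vnormsq v.
Proof. coords; ring. Qed.

Lemma Cauchy_Schwarz_C2 (a b p q : C) :
  Cdot (Cplus (Cmult a p) (Cmult b q)) (Cplus (Cmult a p) (Cmult b q))
  <= vnormsq (a, b) * vnormsq (p, q).
Proof.
  destruct a as [a1 a2], b as [b1 b2], p as [p1 p2], q as [q1 q2]; coords.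
  assert (Lagrange : (a1 * a1 + a2 * a2 + (b1 * b1 + b2 * b2)) *
                     (p1 * p1 + p2 * p2 + (q1 * q1 + q2 * q2)) -
    ((a1 * p1 - a2 * p2 + (b1 * q1 - b2 * q2)) * (a1 * p1 - a2 * p2 + (b1 * q1 - b2 * q2)) +
     (a1 * p2 + a2 * p1 + (b1 * q2 + b2 * q1)) * (a1 * p2 + a2 * p1 + (b1 * q2 + b2 * q1)))
    = (a1 * q1 + a2 * q2 - b1 * p1 - b2 * p2) ^ 2 + (a2 * q1 - a1 * q2 - b2 * p1 + b1 * p2) ^ 2)
    by ring.
  pose proof (pow2_ge_0 (a1 * q1 + a2 * q2 - b1 * p1 - b2 * p2)).
  pose proof (pow2_ge_0 (a2 * q1 - a1 * q2 - b2 * p1 + b1 * p2)).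
  lra.
Qed.

Definition vadd (u v : vec2) : vec2 := (Cplus (fst u) (fst v), Cplus (snd u) (snd v)).

Lemma mulmv2_add_scal (A B : mat2) (x : R) (u : vec2) :
  mulmv2 (mat2_add_scal A x B) u = vadd (mulmv2 A u) (scalv2 x (mulmv2 B u)).
Proof. unfold vadd; coords; f_equal; f_equal; ring. Qed.

Lemma mulmv2_vadd (M : mat2) (u v : vec2) :
  mulmv2 M (vadd u v) = vadd (mulmv2 M u) (mulmv2 M v).
Proof. unfold vadd; coords; f_equal; f_equal; ring. Qed.

Lemma mulmv2_scalv2 (M : mat2) (t : R) (u : vec2) :
  mulmv2 M (scalv2 t u) = scalv2 t (mulmv2 M u).
Proof. coords; f_equal; f_equal; ring. Qed.

Lemma vdot_vadd_r (w u v : vec2) : vdot w (vadd u v) = vdot w u + vdot w v.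
Proof. unfold vadd; coords; ring. Qed.

Lemma vdot_comm (u v : vec2) : vdot u v = vdot v u.
Proof. coords; ring. Qed.

Lemma vnormsq_mulmv2_le (M : mat2) (v : vec2) :
  vnormsq (mulmv2 M v) <= mat2_fnormsq M * vnormsq v.
Proof.
  destruct M as [a b p q], v as [v1 v2].
  unfold mulmv2, mat2_fnormsq, vnormsq at 1, vdot; simpl.
  pose proof (Cauchy_Schwarz_C2 a b v1 v2); pose proof (Cauchy_Schwarz_C2 p q v1 v2).
  lra.
Qed.

Lemma mulmv2_traceless_sq (A : mat2) (d : R) (v : vec2) :
  tr2 A = RtoC 0 -> det2 A = RtoC d -> mulmv2 A (mulmv2 A v) = scalv2 (- d) v.
Proof.
  destruct A as [a b p q]; unfold tr2, det2; simpl; intros trA detA.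
  assert (Hq : q = Copp a).
  { replace q with (Cminus (Cplus a q) a) by ring; rewrite trA; ring. }
  subst q.
  assert (Hsq : Cplus (Cmult a a) (Cmult b p) = RtoC (- d)).
  { rewrite RtoC_opp, <- detA; ring. }
  unfold mulmv2, scalv2; simpl; rewrite <- Hsq.
  f_equal; ring.
Qed.

Definition R_deriv_on01 (f f' : R -> R) : Prop :=
  forall x, in01 x -> forall eps, 0 < eps -> exists delta, 0 < delta /\
    forall h, h <> 0 -> in01 (x + h) -> Rabs h < delta ->
      Rabs ((f (x + h) - f x) / h - f' x) < eps.

Lemma Im_le_Cmod (z : C) : Rabs (Im z) <= Cmod z.
Proof. eapply Rle_trans; [apply Rmax_r | apply Rmax_Cmod]. Qed.

Lemma Re_Im_Cdiff_quotient (a b l : C) (h : R) : h <> 0 ->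
  Re (Cminus (Cdiv (Cminus a b) (RtoC h)) l) = (Re a - Re b) / h - Re l /\
  Im (Cminus (Cdiv (Cminus a b) (RtoC h)) l) = (Im a - Im b) / h - Im l.
Proof.
  intros Hh; destruct a, b, l.
  unfold Cminus, Cdiv, Cplus, Copp, Cmult, Cinv, RtoC, Re, Im; simpl; split; field; auto.
Qed.

Lemma C_deriv_on01_Re_Im (f f' : R -> C) : C_deriv_on01 f f' ->
  R_deriv_on01 (fun t => Re (f t)) (fun t => Re (f' t)) /\
  R_deriv_on01 (fun t => Im (f t)) (fun t => Im (f' t)).
Proof.
  intros Hf; split; intros x Hx eps Heps;
    destruct (Hf x Hx eps Heps) as [delta [Hdelta Hquot]];
    exists delta; split; auto; intros h Hh Hxh Hhd;
    apply Rle_lt_trans with (2 := Hquot h Hh Hxh Hhd);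
    destruct (Re_Im_Cdiff_quotient (f (x + h)) (f x) (f' x) h Hh) as [HRe HIm].
  - rewrite <- HRe; apply re_le_Cmod.
  - rewrite <- HIm; apply Im_le_Cmod.
Qed.

(* Odd reflection through (1, f 1): a derivative within (0,1] at 1 becomes a two-sided
   one, so the mean value theorem applies on intervals ending at 1. *)
Definition reflect_at_1 (f : R -> R) (t : R) : R :=
  if Rle_dec t 1 then f t else 2 * f 1 - f (2 - t).

Lemma reflect_at_1_le (f : R -> R) (t : R) : t <= 1 -> reflect_at_1 f t = f t.
Proof. intros Ht; unfold reflect_at_1; destruct (Rle_dec t 1); [reflexivity | lra]. Qed.

Lemma is_derive_reflect_at_1 (f f' : R -> R) (x : R) :
  R_deriv_on01 f f' -> in01 x -> is_derive (reflect_at_1 f) x (f' x).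
Proof.
  intros Hf Hx; apply is_derive_Reals; intros eps Heps.
  destruct (Hf x Hx eps Heps) as [delta [Hdelta Hquot]].
  destruct Hx as [Hx0 Hx1]; destruct (Rlt_or_le x 1) as [Hlt | Hge].
  - assert (Hpos : 0 < Rmin delta (Rmin x (1 - x))) by (repeat apply Rmin_pos; lra).
    exists (mkposreal _ Hpos); simpl; intros h Hh Hhd.
    pose proof (Rmin_l delta (Rmin x (1 - x))); pose proof (Rmin_r delta (Rmin x (1 - x))).
    pose proof (Rmin_l x (1 - x)); pose proof (Rmin_r x (1 - x)).
    apply Rabs_def2 in Hhd.
    rewrite !reflect_at_1_le by lra.
    apply Hquot; auto; [split | apply Rabs_def1]; lra.
  - assert (x = 1) by lra; subst x.
    assert (Hpos : 0 < Rmin delta 1) by (apply Rmin_pos; lra).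
    exists (mkposreal _ Hpos); simpl; intros h Hh Hhd.
    pose proof (Rmin_l delta 1); pose proof (Rmin_r delta 1).
    apply Rabs_def2 in Hhd.
    destruct (Rle_or_lt h 0).
    + rewrite !reflect_at_1_le by lra.
      apply Hquot; auto; [split | apply Rabs_def1]; lra.
    + unfold reflect_at_1 at 1; destruct (Rle_dec (1 + h) 1); [lra |].
      rewrite reflect_at_1_le by lra.
      replace ((2 * f 1 - f (2 - (1 + h)) - f 1) / h - f' 1)
        with ((f (1 + - h) - f 1) / - h - f' 1)
        by (replace (2 - (1 + h)) with (1 + - h) by ring; field; lra).
      apply Hquot; [lra | split | apply Rabs_def1]; lra.
Qed.

Definition C_is_derive (f : R -> C) (x : R) (l : C) : Prop :=
  is_derive (fun t => Re (f t)) x (Re l) /\ is_derive (fun t => Im (f t)) x (Im l).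

Definition vec2_is_derive (w : R -> vec2) (x : R) (l : vec2) : Prop :=
  C_is_derive (fun t => fst (w t)) x (fst l) /\ C_is_derive (fun t => snd (w t)) x (snd l).

Lemma is_derive_Rplus (f g : R -> R) (x df dg : R) :
  is_derive f x df -> is_derive g x dg -> is_derive (fun t => f t + g t) x (df + dg).
Proof. exact (is_derive_plus f g x df dg). Qed.

Lemma is_derive_Rminus (f g : R -> R) (x df dg : R) :
  is_derive f x df -> is_derive g x dg -> is_derive (fun t => f t - g t) x (df - dg).
Proof. exact (is_derive_minus f g x df dg). Qed.

Lemma C_is_derive_lincomb (a b : C) (f g : R -> C) (x : R) (df dg : C) :
  C_is_derive f x df -> C_is_derive g x dg ->
  C_is_derive (fun t => Cplus (Cmult a (f t)) (Cmult b (g t))) x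
              (Cplus (Cmult a df) (Cmult b dg)).
Proof.
  intros [HfRe HfIm] [HgRe HgIm].
  unfold C_is_derive, Cplus, Cmult, Re, Im in *; simpl; split;
    apply is_derive_Rplus; try apply is_derive_Rminus; try apply is_derive_Rplus;
    apply is_derive_scal; assumption.
Qed.

Lemma is_derive_Cdot (f g : R -> C) (x : R) (df dg : C) :
  C_is_derive f x df -> C_is_derive g x dg ->
  is_derive (fun t => Cdot (f t) (g t)) x (Cdot df (g x) + Cdot (f x) dg).
Proof.
  intros [HfRe HfIm] [HgRe HgIm].
  replace (Cdot df (g x) + Cdot (f x) dg) with
    ((Re df * Re (g x) + Re (f x) * Re dg) + (Im df * Im (g x) + Im (f x) * Im dg))
    by (unfold Cdot; ring).
  apply is_derive_Rplus; apply Derive.is_derive_mult; assumption.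
Qed.

Lemma vec2_is_derive_mulmv2 (M : mat2) (w : R -> vec2) (x : R) (l : vec2) :
  vec2_is_derive w x l -> vec2_is_derive (fun t => mulmv2 M (w t)) x (mulmv2 M l).
Proof. intros [H1 H2]; split; apply C_is_derive_lincomb; assumption. Qed.

Lemma is_derive_vnormsq (w : R -> vec2) (x : R) (l : vec2) :
  vec2_is_derive w x l -> is_derive (fun t => vnormsq (w t)) x (2 * vdot (w x) l).
Proof.
  intros [H1 H2].
  replace (2 * vdot (w x) l) with
    ((Cdot (fst l) (fst (w x)) + Cdot (fst (w x)) (fst l)) +
     (Cdot (snd l) (snd (w x)) + Cdot (snd (w x)) (snd l)))
    by (unfold vdot, Cdot; ring).
  apply is_derive_Rplus; apply is_derive_Cdot; assumption.
Qed.

Definition vec2_reflect_at_1 (y : R -> vec2) (t : R) : vec2 :=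
  ((reflect_at_1 (fun s => Re (fst (y s))) t, reflect_at_1 (fun s => Im (fst (y s))) t),
   (reflect_at_1 (fun s => Re (snd (y s))) t, reflect_at_1 (fun s => Im (snd (y s))) t)).

Lemma vec2_reflect_at_1_le (y : R -> vec2) (t : R) : t <= 1 -> vec2_reflect_at_1 y t = y t.
Proof.
  intros Ht; unfold vec2_reflect_at_1; rewrite !reflect_at_1_le by exact Ht.
  destruct (y t) as [[? ?] [? ?]]; reflexivity.
Qed.

Lemma vec2_is_derive_reflect_at_1 (y y' : R -> vec2) (x : R) :
  deriv_on01 y y' -> in01 x -> vec2_is_derive (vec2_reflect_at_1 y) x (y' x).
Proof.
  intros [Hfst Hsnd] Hx.
  destruct (C_deriv_on01_Re_Im _ _ Hfst) as [H1 H2].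
  destruct (C_deriv_on01_Re_Im _ _ Hsnd) as [H3 H4].
  split; split;
    [exact (is_derive_reflect_at_1 _ _ x H1 Hx) | exact (is_derive_reflect_at_1 _ _ x H2 Hx)
    |exact (is_derive_reflect_at_1 _ _ x H3 Hx) | exact (is_derive_reflect_at_1 _ _ x H4 Hx)].
Qed.

Lemma nonincreasing_of_derive_nonpos (F dF : R -> R) (a b : R) :
  (forall x, a <= x <= b -> is_derive F x (dF x)) ->
  (forall x, a <= x <= b -> dF x <= 0) -> a <= b -> F b <= F a.
Proof.
  intros HF HdF Hab.
  destruct (MVT_gen F a b dF) as [c [Hc HMVT]];
    rewrite ?Rmin_left, ?Rmax_right in * by exact Hab.
  - intros x Hx; apply HF; lra.
  - intros x Hx; apply continuity_pt_filterlim, (ex_derive_continuous (V := R_NormedModule)).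
    exists (dF x); apply HF; exact Hx.
  - pose proof (HdF c Hc); nra.
Qed.

Lemma nondecreasing_of_derive_nonneg (F dF : R -> R) (a b : R) :
  (forall x, a <= x <= b -> is_derive F x (dF x)) ->
  (forall x, a <= x <= b -> 0 <= dF x) -> a <= b -> F a <= F b.
Proof.
  intros HF HdF Hab.
  enough (- F b <= - F a) by lra.
  apply (nonincreasing_of_derive_nonpos (fun t => - F t) (fun t => - dF t)); auto.
  - intros x Hx; apply (is_derive_opp F), HF, Hx.
  - intros x Hx; specialize (HdF x Hx); lra.
Qed.

Lemma exp_le_exp_of_le (a b : R) : a <= b -> exp a <= exp b.
Proof. intros [Hlt | ->]; [left; apply exp_increasing, Hlt | right; reflexivity]. Qed.

Lemma is_derive_exp_div_id (k x : R) : 0 < x ->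
  is_derive (fun t => exp (k * t) / t) x (exp (k * x) * (k * x - 1) / (x * x)).
Proof. intros Hx; auto_derive; [lra | field; lra]. Qed.

Lemma is_derive_id_mul_exp (k x : R) :
  is_derive (fun t => t * exp (k * t)) x (exp (k * x) * (1 + k * x)).
Proof. auto_derive; [exact I | ring]. Qed.

Section Gronwall.

Variables (Q dQ : R -> R) (K : R).
Hypothesis K_ge0 : 0 <= K.
Hypothesis Q_derive : forall x, in01 x -> is_derive Q x (dQ x).
Hypothesis log_derive_bound : forall x, in01 x -> Rabs (x * dQ x) <= (1 + K * x) * Q x.

Lemma Gronwall_nonneg (x : R) : in01 x -> 0 <= Q x.
Proof.
  intros Hx; pose proof (log_derive_bound x Hx); pose proof (Rabs_pos (x * dQ x)).
  assert (0 < 1 + K * x) by (destruct Hx; nra).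
  nra.
Qed.

Lemma Gronwall_nonincreasing (a b : R) : in01 a -> in01 b -> a <= b ->
  Q b * exp (- K * b) / b <= Q a * exp (- K * a) / a.
Proof.
  intros [Ha0 Ha1] [Hb0 Hb1] Hab.
  apply (nonincreasing_of_derive_nonpos (fun t => Q t * exp (- K * t) / t)
    (fun t => exp (- K * t) / (t * t) * (t * dQ t - (1 + K * t) * Q t))); auto.
  - intros x Hx.
    replace (exp (- K * x) / (x * x) * (x * dQ x - (1 + K * x) * Q x))
      with (dQ x * (exp (- K * x) / x) + Q x * (exp (- K * x) * (- K * x - 1) / (x * x)))
      by (field; lra).
    apply (is_derive_ext (fun t => Q t * (exp (- K * t) / t)));
      [intros t; simpl; unfold Rdiv; ring |].
    apply (Derive.is_derive_mult Q (fun t => exp (- K * t) / t));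
      [apply Q_derive; split; lra | apply is_derive_exp_div_id; lra].
  - intros x Hx.
    assert (Hx01 : in01 x) by (split; lra).
    pose proof (log_derive_bound x Hx01) as Hbound; apply Rabs_le_between in Hbound.
    assert (0 < exp (- K * x) / (x * x)) by (apply Rdiv_lt_0_compat; [apply exp_pos | nra]).
    nra.
Qed.

Lemma Gronwall_nondecreasing (a b : R) : in01 a -> in01 b -> a <= b ->
  Q a * (a * exp (K * a)) <= Q b * (b * exp (K * b)).
Proof.
  intros [Ha0 Ha1] [Hb0 Hb1] Hab.
  apply (nondecreasing_of_derive_nonneg (fun t => Q t * (t * exp (K * t)))
    (fun t => exp (K * t) * (t * dQ t + (1 + K * t) * Q t))); auto.
  - intros x Hx.
    replace (exp (K * x) * (x * dQ x + (1 + K * x) * Q x))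
      with (dQ x * (x * exp (K * x)) + Q x * (exp (K * x) * (1 + K * x))) by ring.
    apply (Derive.is_derive_mult Q (fun t => t * exp (K * t)));
      [apply Q_derive; split; lra | apply is_derive_id_mul_exp].
  - intros x Hx.
    assert (Hx01 : in01 x) by (split; lra).
    pose proof (log_derive_bound x Hx01) as Hbound; apply Rabs_le_between in Hbound.
    pose proof (exp_pos (K * x)); nra.
Qed.

Lemma Gronwall_linear_bound_left (x0 x : R) : in01 x0 -> in01 x -> x <= x0 ->
  Q x0 * x0 * exp (- K) * x <= Q x.
Proof.
  intros Hx0 Hx Hle.
  pose proof (Gronwall_nonincreasing x x0 Hx Hx0 Hle) as Hmono.
  pose proof (Gronwall_nonneg x0 Hx0); pose proof (Gronwall_nonneg x Hx).
  destruct Hx0 as [Hx00 Hx01], Hx as [Hx_0 Hx_1].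
  assert (exp (- K) <= exp (- K * x0)) by (apply exp_le_exp_of_le; nra).
  assert (exp (- K * x) <= 1) by (rewrite <- exp_0; apply exp_le_exp_of_le; nra).
  assert (Hstart : Q x0 * x0 * exp (- K) <= Q x0 * exp (- K * x0) / x0).
  { apply Rmult_le_reg_r with x0; [lra |].
    replace (Q x0 * exp (- K * x0) / x0 * x0) with (Q x0 * exp (- K * x0)) by (field; lra).
    assert (x0 * x0 * exp (- K) <= exp (- K * x0))
      by (pose proof (exp_pos (- K)); assert (x0 * x0 <= 1) by nra; nra).
    replace (Q x0 * x0 * exp (- K) * x0) with (Q x0 * (x0 * x0 * exp (- K))) by ring.
    apply Rmult_le_compat_l; assumption. }
  assert (Hend : Q x * exp (- K * x) / x <= Q x / x).
  { unfold Rdiv; apply Rmult_le_compat_r; [apply Rlt_le, Rinv_0_lt_compat; lra |].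
    pose proof (exp_pos (- K * x)); nra. }
  replace (Q x) with (Q x / x * x) by (field; lra).
  apply Rmult_le_compat_r; lra.
Qed.

Lemma Gronwall_linear_bound_right (x0 x : R) : in01 x0 -> in01 x -> x0 <= x ->
  Q x0 * x0 * exp (- K) * x <= Q x.
Proof.
  intros Hx0 Hx Hle.
  pose proof (Gronwall_nondecreasing x0 x Hx0 Hx Hle) as Hmono.
  pose proof (Gronwall_nonneg x0 Hx0); pose proof (Gronwall_nonneg x Hx).
  destruct Hx0 as [Hx00 Hx01], Hx as [Hx_0 Hx_1].
  assert (0 <= Q x0 * x0 * exp (- K)) by
    (pose proof (exp_pos (- K)); apply Rmult_le_pos; [apply Rmult_le_pos |]; lra).
  assert (1 <= exp (K * x0)) by (rewrite <- exp_0; apply exp_le_exp_of_le; nra).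
  assert (exp (K * x) * exp (- K) <= 1) by
    (rewrite <- exp_plus, <- exp_0; apply exp_le_exp_of_le; nra).
  assert (Q x0 * x0 * exp (- K) <= Q x0 * (x0 * exp (K * x0)) * exp (- K)) by nra.
  assert (Q x0 * (x0 * exp (K * x0)) * exp (- K) <= Q x * (x * exp (K * x)) * exp (- K))
    by (apply Rmult_le_compat_r; [apply Rlt_le, exp_pos | exact Hmono]).
  assert (Q x * (x * exp (K * x)) * exp (- K) <= Q x * x).
  { replace (Q x * (x * exp (K * x)) * exp (- K)) with (Q x * x * (exp (K * x) * exp (- K)))
      by ring.
    rewrite <- (Rmult_1_r (Q x * x)) at 2; apply Rmult_le_compat_l; nra. }
  nra.
Qed.

Lemma Gronwall_linear_lower_bound (x0 x : R) : in01 x0 -> in01 x ->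
  Q x0 * x0 * exp (- K) * x <= Q x.
Proof.
  intros Hx0 Hx; destruct (Rle_or_lt x x0).
  - apply Gronwall_linear_bound_left; assumption.
  - apply Gronwall_linear_bound_right; [assumption | assumption | lra].
Qed.

End Gronwall.

Section Energy.

Variables (A B : mat2) (d c : R).
Hypotheses (trA : tr2 A = RtoC 0) (detA : det2 A = RtoC d).
Hypotheses (c_gt0 : 0 < c) (c_root : c * c - d = c).

Definition energy (u : vec2) : R := vnormsq (mulmv2 A u) + c * c * vnormsq u.

Definition energy_deriv (u u' : vec2) : R :=
  2 * vdot (mulmv2 A u) (mulmv2 A u') + c * c * (2 * vdot u u').

Definition energy_perturbation (u : vec2) : R :=
  2 * vdot (mulmv2 A u) (mulmv2 A (mulmv2 B u)) + c * c * (2 * vdot u (mulmv2 B u)).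

Definition energy_rate : R :=
  1 + mat2_fnormsq B + mat2_fnormsq A * mat2_fnormsq B / (c * c).

Lemma energy_rate_ge0 : 0 <= energy_rate.
Proof.
  pose proof (mat2_fnormsq_ge0 A); pose proof (mat2_fnormsq_ge0 B).
  assert (0 <= mat2_fnormsq A * mat2_fnormsq B / (c * c))
    by (apply Rdiv_le_0_compat; nra).
  unfold energy_rate; lra.
Qed.

Lemma energy_gt0 (u : vec2) : u <> (RtoC 0, RtoC 0) -> 0 < energy u.
Proof.
  intros Hu; pose proof (vnormsq_gt0 u Hu); pose proof (vnormsq_ge0 (mulmv2 A u)).
  assert (0 < c * c * vnormsq u) by (apply Rmult_lt_0_compat; nra).
  unfold energy; lra.
Qed.

Lemma energy_le (u : vec2) : energy u <= (mat2_fnormsq A + c * c) * vnormsq u.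
Proof. pose proof (vnormsq_mulmv2_le A u); unfold energy; lra. Qed.

Lemma is_derive_energy (w : R -> vec2) (x : R) (l : vec2) :
  vec2_is_derive w x l -> is_derive (fun t => energy (w t)) x (energy_deriv (w x) l).
Proof.
  intros Hw; unfold energy, energy_deriv.
  apply is_derive_Rplus; [| apply is_derive_scal];
    apply is_derive_vnormsq; [apply vec2_is_derive_mulmv2 |]; exact Hw.
Qed.

(* With A^2 = - d, the O(1) part of x Q' is 2 (c^2 - d) Re <u, A u>; the choice
   c^2 - d = c makes it bounded by the energy itself. *)
Lemma energy_deriv_along_ode (x : R) (u u' : vec2) :
  scalv2 x u' = mulmv2 (mat2_add_scal A x B) u ->
  x * energy_deriv u u' = 2 * c * vdot u (mulmv2 A u) + x * energy_perturbation u.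
Proof.
  intros Hode.
  transitivity (energy_deriv u (scalv2 x u')).
  { unfold energy_deriv; rewrite mulmv2_scalv2, !vdot_scalv2_r; ring. }
  unfold energy_deriv, energy_perturbation.
  rewrite Hode, mulmv2_add_scal, mulmv2_vadd, mulmv2_scalv2, (mulmv2_traceless_sq A d u trA detA).
  rewrite !vdot_vadd_r, !vdot_scalv2_r, (vdot_comm (mulmv2 A u) u).
  replace (c * c) with (c + d) by lra; ring.
Qed.

Lemma Rabs_cross_term_le_energy (u : vec2) : Rabs (2 * c * vdot u (mulmv2 A u)) <= energy u.
Proof.
  pose proof (Rabs_2vdot_le (mulmv2 A u) (scalv2 c u)) as H.
  rewrite vdot_scalv2_r, vnormsq_scalv2, vdot_comm in H.
  unfold energy; replace (2 * c * vdot u (mulmv2 A u)) with (2 * (c * vdot u (mulmv2 A u)))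
    by ring; exact H.
Qed.

Lemma Rabs_energy_perturbation_le (u : vec2) :
  Rabs (energy_perturbation u) <= energy_rate * energy u.
Proof.
  pose proof (mat2_fnormsq_ge0 A); pose proof (mat2_fnormsq_ge0 B).
  pose proof (Rabs_2vdot_le (mulmv2 A u) (mulmv2 A (mulmv2 B u))) as HAB.
  pose proof (Rabs_2vdot_le u (mulmv2 B u)) as HB.
  pose proof (vnormsq_mulmv2_le A (mulmv2 B u)) as HnA.
  pose proof (vnormsq_mulmv2_le B u) as HnB.
  pose proof (vnormsq_ge0 u); pose proof (vnormsq_ge0 (mulmv2 A u)).
  set (nA := mat2_fnormsq A) in *; set (nB := mat2_fnormsq B) in *.
  assert (Hc2 : nA * nB / (c * c) * (c * c) = nA * nB) by (field; nra).
  assert (0 <= nA * nB / (c * c)) by (apply Rdiv_le_0_compat; nra).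
  unfold energy_perturbation, energy_rate, energy; fold nA nB.
  eapply Rle_trans; [apply Rabs_triang |].
  rewrite (Rabs_mult (c * c)), (Rabs_pos_eq (c * c)) by nra.
  assert (nA * vnormsq (mulmv2 B u) <= nA * (nB * vnormsq u)) by (apply Rmult_le_compat_l; lra).
  assert (c * c * Rabs (2 * vdot u (mulmv2 B u)) <= c * c * (vnormsq u + nB * vnormsq u))
    by (apply Rmult_le_compat_l; nra).
  assert (0 <= (nB + nA * nB / (c * c)) * vnormsq (mulmv2 A u)) by nra.
  replace (nA * (nB * vnormsq u)) with (nA * nB / (c * c) * (c * c) * vnormsq u) in * by
    (rewrite Hc2; ring).
  nra.
Qed.

Lemma energy_log_derive_bound (x : R) (u u' : vec2) : 0 < x ->
  scalv2 x u' = mulmv2 (mat2_add_scal A x B) u ->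
  Rabs (x * energy_deriv u u') <= (1 + energy_rate * x) * energy u.
Proof.
  intros Hx Hode; rewrite (energy_deriv_along_ode x u u' Hode).
  pose proof (Rabs_cross_term_le_energy u); pose proof (Rabs_energy_perturbation_le u).
  eapply Rle_trans; [apply Rabs_triang |].
  rewrite (Rabs_mult x), (Rabs_pos_eq x) by lra.
  nra.
Qed.

End Energy.

(* The only use of det A >= -1/4: the energy needs a real positive c. *)
Lemma exists_pos_root_sq_sub (d : R) : -(1/4) <= d -> exists c, 0 < c /\ c * c - d = c.
Proof.
  intros Hd; exists ((1 + sqrt (1 + 4 * d)) / 2).
  pose proof (sqrt_pos (1 + 4 * d)); pose proof (sqrt_sqrt (1 + 4 * d)).
  split; nra.
Qed.

Lemma sqrt_scaled_le (k M x q : R) : 0 <= k -> 0 < M -> 0 <= x -> k * x <= M * q ->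
  sqrt (k / M) * sqrt x <= sqrt q.
Proof.
  intros Hk HM Hx Hkx.
  rewrite <- sqrt_mult_alt by (apply Rdiv_le_0_compat; assumption).
  apply sqrt_le_1_alt.
  apply Rmult_le_reg_l with M; [exact HM |].
  replace (M * (k / M * x)) with (k * x) by (field; lra); exact Hkx.
Qed.

Theorem mainTheorem3 (A B : mat2) (d : R) (y y' : R -> vec2) :
  tr2 A = RtoC 0 ->
  det2 A = RtoC d -> -(1/4) <= d ->
  deriv_on01 y y' ->
  (forall x, in01 x -> scalv2 x (y' x) = mulmv2 (mat2_add_scal A x B) (y x)) ->
  (exists x0, in01 x0 /\ y x0 <> (RtoC 0, RtoC 0)) ->
  exists eps, 0 < eps /\ forall x, in01 x -> eps * sqrt x <= vnorm2 (y x).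
Proof.
  intros trA detA d_ge Hy Hode [x0 [Hx0 Hy0]].
  destruct (exists_pos_root_sq_sub d d_ge) as [c [c_gt0 c_root]].
  set (Q t := energy A c (vec2_reflect_at_1 y t)).
  set (K := energy_rate A B c).
  assert (HQ : forall t, in01 t -> Q t = energy A c (y t))
    by (intros t [_ Ht]; unfold Q; rewrite vec2_reflect_at_1_le by exact Ht; reflexivity).
  assert (Hlow : forall x, in01 x -> Q x0 * x0 * exp (- K) * x <= Q x).
  { intros x Hx.
    apply (Gronwall_linear_lower_bound Q (fun t => energy_deriv A c (y t) (y' t)) K);
      [apply energy_rate_ge0; exact c_gt0 | intros t Ht | intros t Ht | exact Hx0 | exact Hx].
    - rewrite <- (vec2_reflect_at_1_le y t) by (destruct Ht; lra).
      apply is_derive_energy, vec2_is_derive_reflect_at_1; assumption.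
    - rewrite HQ by exact Ht.
      apply (energy_log_derive_bound A B d c trA detA c_gt0 c_root);
        [destruct Ht; lra | apply Hode, Ht]. }
  set (kappa := Q x0 * x0 * exp (- K)).
  assert (kappa_gt0 : 0 < kappa).
  { assert (0 < Q x0) by (rewrite HQ by exact Hx0; exact (energy_gt0 A c c_gt0 _ Hy0)).
    pose proof (exp_pos (- K)); destruct Hx0.
    unfold kappa; apply Rmult_lt_0_compat; [apply Rmult_lt_0_compat |]; assumption. }
  assert (M_gt0 : 0 < mat2_fnormsq A + c * c) by (pose proof (mat2_fnormsq_ge0 A); nra).
  exists (sqrt (kappa / (mat2_fnormsq A + c * c))); split.
  - apply sqrt_lt_R0, Rdiv_lt_0_compat; assumption.
  - intros x Hx; rewrite vnorm2_sqrt.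
    apply sqrt_scaled_le; [lra | exact M_gt0 | destruct Hx; lra |].
    pose proof (Hlow x Hx) as Hx_low; rewrite (HQ x Hx) in Hx_low.
    pose proof (energy_le A c (y x)); unfold kappa; lra.
Qed.
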